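(* Under the standing assumptions below, let $e,f\in S_1$ with $ef=f$. Then $\|\theta(e)-\theta(f)\|_{HS}\le5\delta$.
   Context: Standing assumptions: $S$ is a semilattice (commutative semigroup of idempotents), $0\le\delta<0.03$, and $\theta:S\to M_2(\mathbb C)$ satisfies $\|\theta(e)\theta(f)-\theta(ef)\|_{HS}\le\delta$ for all $e,f\in S$, where $\|A\|_{HS}=(\operatorname{tr}(A^*A))^{1/2}$. For $k\in\{0,1,2\}$, $S_k=\{x\in S:\ |\operatorname{tr}\theta(x)-k|<0.95\}$; these sets are pairwise disjoint and cover $S$. *)

From HB Require Import structures.
From mathcomp Require Import all_boot all_order all_algebra.
Set Implicit Arguments. Unset Strict Implicit. Unset Printing Implicit Defensive.
Import Order.TTheory GRing.Theory Num.Theory.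
Local Open Scope ring_scope.

Definition conjT (C : numClosedFieldType) (n : nat) (A : 'M[C]_n) : 'M[C]_n :=
  (map_mx Num.conj A)^T.

Definition hs_norm (C : numClosedFieldType) (n : nat) (A : 'M[C]_n) : C :=
  sqrtC (\tr (conjT A *m A)).

Definition is_semilattice (S : Type) (op : S -> S -> S) : Prop :=
  (forall x y z, op x (op y z) = op (op x y) z) /\
  (forall x y, op x y = op y x) /\
  (forall x, op x x = x).

Definition in_Sk (C : numClosedFieldType) (S : Type) (theta : S -> 'M[C]_2)
  (k : nat) (x : S) : bool :=
  `|\tr (theta x) - k%:R| < 95%:R / 100%:R.

From HB Require Import structures.
From mathcomp Require Import all_boot all_order all_algebra ssrAC.
From mathcomp Require Import ring lra.
Import Order.TTheory GRing.Theory Num.Theory.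
Local Open Scope ring_scope.

(* Two approximate idempotents of trace close to 1 that approximately absorb
   each other are close.  Write A = theta e, B = theta f and d = delta.

   1. Trace.  If E = M^2 - M has HS norm <= d and |tr M - 1| < 0.95, then
      |tr M - 1| <= 8/5 d: with u = tr M - 1 one has the polynomial identity
      u^2 = (E00 - E11)^2 + 4 E01 E10 + u^4 - 2 u^2 (E00 + E11), and the
      resulting quadratic inequality in u^2 rules out the large root.
   2. Difference.  X = A - B satisfies
      X^2 - X = (A^2 - A) + (B^2 - B) - (AB - B) - (BA - B),
      so ||X^2 - X|| <= 4d, while |tr X| <= 16/5 d by step 1.
   3. Cayley-Hamilton for X gives (tr X - 1) X = (X^2 - X) + det X . I together
      with formulas for the trace and determinant of X^2 - X; these force
      |det X| <= 8/25 d, and then |tr X - 1| ||X|| <= 4d + sqrt 2 |det X|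
      yields ||X|| <= 5d.

   The numerical inequalities are proved over an arbitrary real field, where
   (n)lra applies, and transferred to the real elements of the
   numClosedFieldType C through the real subfield [realsub C] built first. *)

Section RealSubfield.
Variable C : numFieldType.

Definition realsub := {x : C | x \is Num.real}.

HB.instance Definition _ := [isSub for (@proj1_sig C _ : realsub -> C)].
HB.instance Definition _ := [Choice of realsub by <:].
HB.instance Definition _ := [SubChoice_isSubComUnitRing of realsub by <:].
HB.instance Definition _ := [SubComUnitRing_isSubIntegralDomain of realsub by <:].
HB.instance Definition _ := [SubIntegralDomain_isSubField of realsub by <:].

Definition realsub_le (x y : realsub) := val x <= val y.
Definition realsub_lt (x y : realsub) := val x < val y.
Definition realsub_norm (x : realsub) : realsub :=
  exist (fun z => z \is Num.real) `|val x| (normr_real (val x)).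

Lemma realsub_addr_ge0 (x y : realsub) :
  realsub_le 0 x -> realsub_le 0 y -> realsub_le 0 (x + y).
Proof. rewrite /realsub_le rmorphD rmorph0; exact: addr_ge0. Qed.

Lemma realsub_mulr_ge0 (x y : realsub) :
  realsub_le 0 x -> realsub_le 0 y -> realsub_le 0 (x * y).
Proof. rewrite /realsub_le rmorphM rmorph0; exact: mulr_ge0. Qed.

Lemma realsub_ge0_anti (x : realsub) : realsub_le 0 x -> realsub_le x 0 -> x = 0.
Proof.
rewrite /realsub_le rmorph0 => x_ge0 x_le0.
by apply: val_inj; rewrite rmorph0; apply/eqP; rewrite eq_le x_ge0 x_le0.
Qed.

Lemma realsub_subr_ge0 (x y : realsub) : realsub_le 0 (y - x) = realsub_le x y.
Proof. by rewrite /realsub_le rmorphB rmorph0 subr_ge0. Qed.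

Lemma realsub_ge0_total (x : realsub) : realsub_le 0 x || realsub_le x 0.
Proof. by rewrite /realsub_le rmorph0; case: x => /= x xR; rewrite real_leVge ?real0. Qed.

Lemma realsub_normN (x : realsub) : realsub_norm (- x) = realsub_norm x.
Proof. by apply: val_inj => /=; rewrite normrN. Qed.

Lemma realsub_ge0_norm (x : realsub) : realsub_le 0 x -> realsub_norm x = x.
Proof. by rewrite /realsub_le rmorph0 => x_ge0; apply: val_inj; rewrite /= ger0_norm. Qed.

Lemma realsub_lt_def (x y : realsub) : realsub_lt x y = (y != x) && realsub_le x y.
Proof. by rewrite /realsub_lt /realsub_le lt_def (inj_eq val_inj). Qed.

HB.instance Definition _ := Num.IntegralDomain_isLeReal.Build realsub
  realsub_addr_ge0 realsub_mulr_ge0 realsub_ge0_anti realsub_subr_ge0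
  realsub_ge0_total realsub_normN realsub_ge0_norm realsub_lt_def.

Lemma realsub_leE (x y : realsub) : (x <= y) = (val x <= val y). Proof. by []. Qed.
Lemma realsub_ltE (x y : realsub) : (x < y) = (val x < val y). Proof. by []. Qed.

End RealSubfield.

Section Embedding.
Context {C : numFieldType}.

(* [of_real x] is x seen in [realsub C] when x is real (and 0 otherwise). *)
Definition of_real (x : C) : realsub C := insubd 0 x.

Lemma of_realK (x : C) : x \is Num.real -> val (of_real x) = x.
Proof. by move=> xR; rewrite /of_real insubdK. Qed.

Lemma of_real_norm (x : C) : val (of_real `|x|) = `|x|.
Proof. by rewrite of_realK ?normr_real. Qed.

End Embedding.

Ltac realsub_to_C :=
  rewrite ?realsub_leE ?realsub_ltE /=
    ?(rmorphD, rmorphB, rmorphM, rmorphXn, rmorphN, rmorph_nat, fmorph_div,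
      rmorph0, rmorph1) ?of_real_norm.

Section Numeric.
Context {F : realFieldType}.

(* Minkowski inequality in R^4, in the form used for the HS triangle
   inequality: entrywise c <= a + b gives ||c|| <= ||a|| + ||b||. *)
Lemma minkowski4 (a0 a1 a2 a3 b0 b1 b2 b3 c0 c1 c2 c3 P Q : F) :
  0 <= a0 -> 0 <= a1 -> 0 <= a2 -> 0 <= a3 ->
  0 <= b0 -> 0 <= b1 -> 0 <= b2 -> 0 <= b3 ->
  0 <= c0 -> 0 <= c1 -> 0 <= c2 -> 0 <= c3 ->
  c0 <= a0 + b0 -> c1 <= a1 + b1 -> c2 <= a2 + b2 -> c3 <= a3 + b3 ->
  0 <= P -> 0 <= Q ->
  P ^+ 2 = a0 ^+ 2 + a1 ^+ 2 + a2 ^+ 2 + a3 ^+ 2 ->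
  Q ^+ 2 = b0 ^+ 2 + b1 ^+ 2 + b2 ^+ 2 + b3 ^+ 2 ->
  c0 ^+ 2 + c1 ^+ 2 + c2 ^+ 2 + c3 ^+ 2 <= (P + Q) ^+ 2.
Proof.
move=> ? ? ? ? ? ? ? ? ? ? ? ? ? ? ? ? P_ge0 Q_ge0 P2 Q2.
set ab := a0 * b0 + a1 * b1 + a2 * b2 + a3 * b3.
have lagrange : P ^+ 2 * Q ^+ 2 = ab ^+ 2 +
    ((a0 * b1 - a1 * b0) ^+ 2 + (a0 * b2 - a2 * b0) ^+ 2 + (a0 * b3 - a3 * b0) ^+ 2
   + (a1 * b2 - a2 * b1) ^+ 2 + (a1 * b3 - a3 * b1) ^+ 2 + (a2 * b3 - a3 * b2) ^+ 2).
  by rewrite P2 Q2 /ab; ring.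
have cauchy_schwarz : ab <= P * Q.
  have : ab ^+ 2 <= (P * Q) ^+ 2 by rewrite exprMn lagrange lerDl ?addr_ge0 ?sqr_ge0.
  have : 0 <= P * Q by exact: mulr_ge0.
  by clear lagrange; move: (P * Q) ab => x y; nra.
by clear lagrange; rewrite /ab in cauchy_schwarz; nra.
Qed.

(* Numerical content of step 1: p_ij = |E_ij|, s = |E00 - E11|,
   tau = |E00 + E11| and u = |tr M - 1|; the last hypothesis is the norm
   form of the trace identity, a quadratic inequality in u^2 whose large
   root is excluded by u < 0.95. *)
Lemma trace_defect_num (p0 p1 p2 p3 s tau u d : F) :
  0 <= p0 -> 0 <= p1 -> 0 <= p2 -> 0 <= p3 -> 0 <= s -> 0 <= tau -> 0 <= u ->
  0 <= d -> d < 3 / 100 ->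
  p0 ^+ 2 + p1 ^+ 2 + p2 ^+ 2 + p3 ^+ 2 <= d ^+ 2 ->
  s <= p0 + p3 -> tau <= p0 + p3 -> u < 95 / 100 ->
  u ^+ 2 <= s ^+ 2 + 4 * (p1 * p2) + (u ^+ 2) ^+ 2 + 2 * u ^+ 2 * tau ->
  u <= 8 / 5 * d.
Proof.
move=> hp0 hp1 hp2 hp3 hs htau hu hd0 hd1 hp hsp htaup hu1.
have sum03 : (p0 + p3) ^+ 2 <= 2 * (p0 ^+ 2 + p3 ^+ 2).
  by have := sqr_ge0 (p0 - p3); clear; nra.
have prod12 : 4 * (p1 * p2) <= 2 * (p1 ^+ 2 + p2 ^+ 2).
  by have := sqr_ge0 (p1 - p2); clear; nra.
have disc : s ^+ 2 + 4 * (p1 * p2) <= 2 * d ^+ 2.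
  have : s ^+ 2 <= (p0 + p3) ^+ 2 by clear -hs hsp; nra.
  by clear -sum03 prod12 hp; lra.
have d_sq : d ^+ 2 < 9 / 10000 by clear -hd0 hd1; nra.
have tau_small : tau <= 425 / 10000.
  have : tau ^+ 2 <= 2 * d ^+ 2 by clear -htau htaup sum03 prod12 hp; nra.
  by clear -htau d_sq; nra.
have u_sq_lt : u ^+ 2 < 9025 / 10000 by clear -hu hu1; nra.
have [x x_def] : exists x, x = u ^+ 2 by exists (u ^+ 2).
have x_ge0 : 0 <= x by rewrite x_def sqr_ge0.
rewrite -x_def => hq; rewrite -x_def in u_sq_lt.
have quad : x <= 2 * d ^+ 2 + x ^+ 2 + 2 * x * tau by clear -hq disc; lra.
have x_small : x <= 5 / 2 * d ^+ 2.
  case: (lerP x (5 / 2 * d ^+ 2)) => // x_big.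
  have : (x - 5 / 2 * d ^+ 2) * (x - 9025 / 10000) < 0.
    by clear -x_big u_sq_lt d_sq; nra.
  by clear -quad tau_small htau d_sq x_ge0 hd0 x_big; nra.
have : u ^+ 2 <= (8 / 5 * d) ^+ 2 by rewrite -x_def; clear -x_small; nra.
by clear -hu hd0; nra.
Qed.

(* Numerical content of the determinant bound: T = |tr X|, q_ij = |K_ij|
   for K = X^2 - X, D = |det X| and Y = |det X - tr X + 1|.  The trace
   formula gives a rough bound on D, hence Y is close to 1, and then
   D Y <= |det K| <= 8 d^2 gives D = O(d). *)
Lemma det_small_num (d T q0 q1 q2 q3 D Y : F) :
  0 <= d -> d < 3 / 100 -> 0 <= T -> T <= 16 / 5 * d ->
  0 <= q0 -> 0 <= q1 -> 0 <= q2 -> 0 <= q3 ->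
  q0 ^+ 2 + q1 ^+ 2 + q2 ^+ 2 + q3 ^+ 2 <= (4 * d) ^+ 2 ->
  0 <= D -> 2 * D <= T ^+ 2 + T + (q0 + q3) ->
  D * Y <= q0 * q3 + q1 * q2 -> 1 <= Y + D + T ->
  D <= 8 / 25 * d.
Proof.
move=> hd0 hd1 hT0 hT hq0 hq1 hq2 hq3 hq hD0 hD hDY hY.
have diag_sum : q0 + q3 <= 5657 / 1000 * d.
  have : (q0 + q3) ^+ 2 <= 32 * d ^+ 2.
    by have := sqr_ge0 (q0 - q3); nra.
  have : 0 <= q0 + q3 by lra.
  by move: (q0 + q3) => z; nra.
have T_sq : T ^+ 2 <= 96 / 1000 * (16 / 5 * d) by nra.
have D_rough : D <= 138 / 1000 by nra.
have det_K : q0 * q3 + q1 * q2 <= 8 * d ^+ 2.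
  by have := sqr_ge0 (q0 - q3); have := sqr_ge0 (q1 - q2); nra.
have : D * (766 / 1000) <= 8 * d ^+ 2 by nra.
nra.
Qed.

(* Numerical content of the final step: L = |tr X - 1| >= 1 - T,
   N = ||X||, k = ||X^2 - X|| and S = ||det X . I|| = sqrt 2 D. *)
Lemma closeness_num (d T D k S L N : F) :
  0 <= d -> d < 3 / 100 -> T <= 16 / 5 * d ->
  0 <= D -> D <= 8 / 25 * d -> k <= 4 * d ->
  0 <= S -> S ^+ 2 = 2 * D ^+ 2 ->
  1 <= L + T -> 0 <= N -> L * N <= k + S ->
  N <= 5 * d.
Proof.
move=> hd0 hd1 hT hD0 hD hk hS0 hS hL hN0 hLN.
have S_le : S <= 3 / 2 * D by nra.
have L_ge : 904 / 1000 <= L by lra.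
nra.
Qed.

End Numeric.

Local Notation i0 := (ord0 : 'I_2).
Local Notation i1 := (ord_max : 'I_2).

Lemma sqr_defectB (R : pzRingType) (a b : R) :
  (a - b) * (a - b) - (a - b) =
  (a * a - a) + (b * b - b) - (a * b - b) - (b * a - b).
Proof. by rewrite mulrBl !mulrBr !opprB !addrA subrK (ACl (1*6*3*2*5*4)%AC). Qed.

Section TwoByTwo.
Context {R : comNzRingType}.
Implicit Types M : 'M[R]_2.

Lemma sum2 (f : 'I_2 -> R) : \sum_i f i = f i0 + f i1.
Proof. by rewrite big_ord_recr big_ord1; congr (f _ + f _); apply: val_inj. Qed.

Lemma mul2E (M N : 'M[R]_2) i j : (M *m N) i j = M i i0 * N i0 j + M i i1 * N i1 j.
Proof. by rewrite mxE sum2. Qed.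

Lemma tr2E M : \tr M = M i0 i0 + M i1 i1.
Proof. by rewrite /mxtrace sum2. Qed.

Definition det2 M := M i0 i0 * M i1 i1 - M i0 i1 * M i1 i0.

Lemma ord2_cases (i : 'I_2) : i = i0 \/ i = i1.
Proof. by case: i => [[|[|//]]] ?; [left | right]; apply: val_inj. Qed.

Lemma cayley_hamilton_defect M :
  (\tr M - 1) *: M = (M *m M - M) + (det2 M)%:M.
Proof.
apply/matrixP => i j; rewrite tr2E /det2 !mxE !sum2.
by case: (ord2_cases i) => ->; case: (ord2_cases j) => ->; rewrite /=; ring.
Qed.

Lemma tr2_defect M : \tr (M *m M - M) = \tr M ^+ 2 - \tr M - 2 * det2 M.
Proof. by rewrite !tr2E !mxE !sum2 /det2; ring. Qed.

Lemma det2_defect M : det2 (M *m M - M) = det2 M * (det2 M - \tr M + 1).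
Proof. by rewrite /det2 tr2E !mxE !sum2; ring. Qed.

Lemma trace_defect_identity M E u :
  E = M *m M - M -> u = \tr M - 1 ->
  u ^+ 2 = (E i0 i0 - E i1 i1) ^+ 2 + 4 * (E i0 i1 * E i1 i0)
           + (u ^+ 2) ^+ 2 - 2 * u ^+ 2 * (E i0 i0 + E i1 i1).
Proof. by move=> -> ->; rewrite tr2E !mxE !sum2; ring. Qed.

End TwoByTwo.

Section HilbertSchmidt.
Context {C : numClosedFieldType}.
Implicit Types M N : 'M[C]_2.

Definition hs_sq M :=
  `|M i0 i0| ^+ 2 + `|M i0 i1| ^+ 2 + `|M i1 i0| ^+ 2 + `|M i1 i1| ^+ 2.

Lemma hs_normE M : hs_norm M = sqrtC (hs_sq M).
Proof.
rewrite /hs_norm tr2E !mul2E /conjT !mxE /hs_sq -!normCKC.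
by congr sqrtC; ring.
Qed.

Lemma hs_sq_ge0 M : 0 <= hs_sq M.
Proof. by rewrite /hs_sq ?addr_ge0 ?exprn_ge0 ?normr_ge0. Qed.

Lemma hs_norm_ge0 M : 0 <= hs_norm M.
Proof. by rewrite hs_normE sqrtC_ge0 hs_sq_ge0. Qed.

Lemma hs_norm_real M : hs_norm M \is Num.real.
Proof. exact: ger0_real (hs_norm_ge0 M). Qed.

Lemma hs_normK M : hs_norm M ^+ 2 = hs_sq M.
Proof. by rewrite hs_normE sqrtCK. Qed.

Lemma hs_norm_le M y : 0 <= y -> (hs_norm M <= y) = (hs_sq M <= y ^+ 2).
Proof. by move=> y_ge0; rewrite -hs_normK ler_pXn2r // qualifE /= ?hs_norm_ge0. Qed.

Lemma hs_normN M : hs_norm (- M) = hs_norm M.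
Proof. by rewrite !hs_normE /hs_sq !mxE !normrN. Qed.

Lemma hs_normZ (c : C) M : hs_norm (c *: M) = `|c| * hs_norm M.
Proof.
apply/eqP; rewrite -(eqrXn2 (n := 2)) ?mulr_ge0 ?hs_norm_ge0 //.
by rewrite exprMn !hs_normK /hs_sq !mxE !normrM; apply/eqP; ring.
Qed.

Lemma hs_sq_scalar (c : C) : hs_sq c%:M = 2 * `|c| ^+ 2.
Proof. by rewrite /hs_sq !mxE /= normr0; ring. Qed.

End HilbertSchmidt.

Section Estimates.
Context {C : numClosedFieldType}.
Implicit Types M N : 'M[C]_2.

Lemma hs_norm_triangle M N : hs_norm (M + N) <= hs_norm M + hs_norm N.
Proof.
rewrite hs_norm_le ?addr_ge0 ?hs_norm_ge0 //.
have := minkowski4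
  (of_real `|M i0 i0|) (of_real `|M i0 i1|) (of_real `|M i1 i0|) (of_real `|M i1 i1|)
  (of_real `|N i0 i0|) (of_real `|N i0 i1|) (of_real `|N i1 i0|) (of_real `|N i1 i1|)
  (of_real `|(M + N) i0 i0|) (of_real `|(M + N) i0 i1|)
  (of_real `|(M + N) i1 i0|) (of_real `|(M + N) i1 i1|)
  (of_real (hs_norm M)) (of_real (hs_norm N)).
realsub_to_C; rewrite !of_realK ?hs_norm_real // /hs_sq.
apply; rewrite ?normr_ge0 ?hs_norm_ge0 ?[(M + N) _ _]mxE ?ler_normD //;
  apply: val_inj; realsub_to_C; by rewrite of_realK ?hs_norm_real // -!expr2 hs_normK.
Qed.

Lemma hs_norm_sub M N : hs_norm (M - N) <= hs_norm M + hs_norm N.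
Proof. by rewrite -(hs_normN N) hs_norm_triangle. Qed.

Lemma approx_idempotent_trace M d :
  0 <= d -> d < 3 / 100 -> hs_norm (M *m M - M) <= d ->
  `|\tr M - 1| < 95 / 100 -> `|\tr M - 1| <= 8 / 5 * d.
Proof.
move=> d_ge0 d_small hE u_small.
set E := M *m M - M; set u := \tr M - 1.
have identity := trace_defect_identity M E u erefl erefl.
have norm_identity : `|u| ^+ 2 <= `|E i0 i0 - E i1 i1| ^+ 2
    + 4 * (`|E i0 i1| * `|E i1 i0|) + (`|u| ^+ 2) ^+ 2
    + 2 * `|u| ^+ 2 * `|E i0 i0 + E i1 i1|.
  rewrite -normrX {1}identity; apply: le_trans (ler_normB _ _) _.
  rewrite [`|2 * _ * _|]normrM [`|2 * _|]normrM normr_nat normrX lerD2r.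
  apply: le_trans (ler_normD _ _) _; rewrite !normrX lerD2r.
  by apply: le_trans (ler_normD _ _) _; rewrite normrX !normrM normr_nat.
rewrite hs_norm_le // -/E /hs_sq in hE.
have := trace_defect_num
  (of_real `|E i0 i0|) (of_real `|E i0 i1|) (of_real `|E i1 i0|) (of_real `|E i1 i1|)
  (of_real `|E i0 i0 - E i1 i1|) (of_real `|E i0 i0 + E i1 i1|) (of_real `|u|)
  (of_real d).
realsub_to_C; rewrite of_realK ?ger0_real //.
by apply; rewrite ?normr_ge0 ?ler_normB ?ler_normD.
Qed.

Lemma hs_norm_sum4 (E F G H : 'M[C]_2) (d : C) :
  hs_norm E <= d -> hs_norm F <= d -> hs_norm G <= d -> hs_norm H <= d ->
  hs_norm (E + F - G - H) <= 4 * d.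
Proof.
move=> hE hF hG hH; have -> : 4 * d = d + d + d + d by ring.
apply: le_trans (hs_norm_sub _ _) _; apply: lerD => //.
apply: le_trans (hs_norm_sub _ _) _; apply: lerD => //.
by apply: le_trans (hs_norm_triangle _ _) _; apply: lerD.
Qed.

(* Cayley-Hamilton bookkeeping: if ||X^2 - X|| <= 4d and tr X is small, then
   det X is small, because det (X^2 - X) = det X (det X - tr X + 1) while the
   trace formula already bounds det X by a constant. *)
Lemma approx_idempotent_det (X : 'M[C]_2) (d : C) :
  0 <= d -> d < 3 / 100 -> hs_norm (X *m X - X) <= 4 * d ->
  `|\tr X| <= 16 / 5 * d -> `|det2 X| <= 8 / 25 * d.
Proof.
move=> d_ge0 d_small hK hT.
have trK := tr2_defect X; have detK := det2_defect X.
set K := X *m X - X in trK detK hK.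
set t := \tr X in trK detK hT; set D := det2 X in trK detK *.
have trace_det : 2 * `|D| <= `|t| ^+ 2 + `|t| + (`|K i0 i0| + `|K i1 i1|).
  have twoD : (t ^+ 2 - t) - \tr K = 2 * D by rewrite trK; ring.
  rewrite -(normr_nat C 2) -normrM -twoD.
  apply: le_trans (ler_normB _ _) _; rewrite tr2E lerD ?ler_normD //.
  by rewrite -normrX ler_normB.
have det_det :
    `|D| * `|D - t + 1| <= `|K i0 i0| * `|K i1 i1| + `|K i0 i1| * `|K i1 i0|.
  by rewrite -normrM -detK /det2 -!normrM ler_normB.
have one_le : 1 <= `|D - t + 1| + `|D| + `|t|.
  have e : (D - t + 1) - D + t = 1 by ring.
  rewrite -[X in X <= _](normr1 C) -{1}e; apply: le_trans (ler_normD _ _) _.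
  by rewrite lerD2r ler_normB.
rewrite hs_norm_le ?mulr_ge0 // /hs_sq in hK.
have := det_small_num (of_real d) (of_real `|t|)
  (of_real `|K i0 i0|) (of_real `|K i0 i1|) (of_real `|K i1 i0|) (of_real `|K i1 i1|)
  (of_real `|D|) (of_real `|D - t + 1|).
realsub_to_C; rewrite of_realK ?ger0_real //.
by apply; rewrite ?normr_ge0.
Qed.

(* An approximate idempotent (defect <= 4d) with small trace is small:
   (tr X - 1) X = (X^2 - X) + det X . I and |tr X - 1| is close to 1. *)
Lemma small_trace_approx_idempotent (X : 'M[C]_2) (d : C) :
  0 <= d -> d < 3 / 100 -> hs_norm (X *m X - X) <= 4 * d ->
  `|\tr X| <= 16 / 5 * d -> hs_norm X <= 5 * d.
Proof.
move=> d_ge0 d_small hK hT.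
have D_small := approx_idempotent_det X d d_ge0 d_small hK hT.
have ch := cayley_hamilton_defect X.
set K := X *m X - X in ch hK; set t := \tr X in ch hT D_small.
set D := det2 X in ch D_small.
have one_le : 1 <= `|t - 1| + `|t|.
  have e : - (t - 1) + t = 1 by ring.
  rewrite -[X in X <= _](normr1 C) -{1}e -(normrN (t - 1)); exact: ler_normD.
have scaled : `|t - 1| * hs_norm X <= hs_norm K + hs_norm (D%:M : 'M_2).
  by rewrite -hs_normZ ch hs_norm_triangle.
have S_sq : hs_norm (D%:M : 'M_2) ^+ 2 = 2 * `|D| ^+ 2.
  by rewrite hs_normK hs_sq_scalar.
have S_ge0 := hs_norm_ge0 (D%:M : 'M_2).
move: (hs_norm _) S_sq S_ge0 scaled => S S_sq S_ge0 scaled.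
have := closeness_num (of_real d) (of_real `|t|) (of_real `|D|) (of_real (hs_norm K))
  (of_real S) (of_real `|t - 1|) (of_real (hs_norm X)).
realsub_to_C; rewrite !of_realK ?hs_norm_real ?ger0_real //.
apply=> //; last exact: hs_norm_ge0.
by apply: val_inj; realsub_to_C; rewrite !of_realK ?ger0_real.
Qed.

Lemma approx_idempotents_close (A B : 'M[C]_2) (d : C) :
  0 <= d -> d < 3 / 100 ->
  hs_norm (A *m A - A) <= d -> hs_norm (B *m B - B) <= d ->
  hs_norm (A *m B - B) <= d -> hs_norm (B *m A - B) <= d ->
  `|\tr A - 1| < 95 / 100 -> `|\tr B - 1| < 95 / 100 ->
  hs_norm (A - B) <= 5 * d.
Proof.
move=> d_ge0 d_small hAA hBB hAB hBA trA trB.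
apply: small_trace_approx_idempotent => //.
  by rewrite !mulmxE sqr_defectB -!mulmxE hs_norm_sum4.
have -> : \tr (A - B) = (\tr A - 1) - (\tr B - 1) by rewrite raddfB; ring.
have -> : 16 / 5 * d = 8 / 5 * d + 8 / 5 * d by ring.
by apply: le_trans (ler_normB _ _) _; rewrite lerD ?approx_idempotent_trace.
Qed.

End Estimates.

(* In the semilattice, theta e and theta f are such matrices, since
   ee = e, ff = f and ef = fe = f. *)
Theorem lemmal (C : numClosedFieldType) (S : Type) (op : S -> S -> S)
  (theta : S -> 'M[C]_2) (delta : C)
  (hS : is_semilattice op)
  (hd0 : 0 <= delta) (hd1 : delta < 3%:R / 100%:R)
  (htheta : forall x y : S,
      hs_norm (theta x *m theta y - theta (op x y)) <= delta)
  (e f : S) (he : in_Sk theta 1 e) (hf : in_Sk theta 1 f)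
  (hef : op e f = f) :
  hs_norm (theta e - theta f) <= 5%:R * delta.
Proof.
case: hS => _ [op_comm op_idem].
apply: approx_idempotents_close => //.
- by have := htheta e e; rewrite op_idem.
- by have := htheta f f; rewrite op_idem.
- by have := htheta e f; rewrite hef.
- by have := htheta f e; rewrite op_comm hef.
Qed.
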